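(* Let $q$ be a prime power, $\ell,L$ integers with $1\le\ell\le q$ and $\ell\le L<\ell q$, and $r\in[0,1-\frac{\ell}{L+1})$ with $rn\in\mathbb{N}$. If $C\subseteq\mathbb{F}_q^n$ is a linear $(r,\ell,L)$ list-recoverable code of dimension at least $2$, then its minimum distance satisfies $d(C)>rn+\lfloor\frac{\ell}{L+1-\ell}rn\rfloor$.
   Context: A linear code is a subspace of $\mathbb{F}_q^n$; $d(C)$ is the minimum Hamming distance between distinct codewords. A code $C\subseteq\mathbb{F}_q^n$ is $(r,\ell,L)$ list-recoverable if for every sequence $S_1,\dots,S_n$ of subsets of $\mathbb{F}_q$ of size at most $\ell$, the number of $c\in C$ with $c_i\notin S_i$ for at most $rn$ coordinates $i$ is at most $L$. *)

From HB Require Import structures.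
From mathcomp Require Import all_boot all_order all_algebra.
Set Implicit Arguments. Unset Strict Implicit. Unset Printing Implicit Defensive.
Import Order.TTheory GRing.Theory Num.Theory.
Local Open Scope ring_scope.

Definition hamming (F : finFieldType) (n : nat) (c c' : 'rV[F]_n) : nat :=
  #|[set i : 'I_n | c ord0 i != c' ord0 i]|.

Definition list_recoverable (R : realFieldType) (F : finFieldType) (n : nat)
    (C : {pred 'rV[F]_n}) (r : R) (l L : nat) : Prop :=
  forall S : 'I_n -> {set F}, (forall i, (#|S i| <= l)%N) ->
    (#|[set c : 'rV[F]_n | (c \in C) &&
        ((#|[set i : 'I_n | c ord0 i \notin S i]|)%:R <= r * n%:R)%R]| <= L)%N.

From HB Require Import structures.
From mathcomp Require Import all_boot all_order all_algebra.
From mathcomp Require Import zify.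
Set Implicit Arguments. Unset Strict Implicit. Unset Printing Implicit Defensive.
Import Order.TTheory GRing.Theory Num.Theory.

(* Suppose two codewords were at distance d <= k + floor(l k / (L + 1 - l)),
   and let w be their difference, with support D of size d; pick a codeword
   v off the line spanned by w.  Cutting L + 1 consecutive windows of length
   e = d - k out of D, read cyclically, covers every point of D at most l times
   because e (L + 1) <= d l.  The L + 1 distinct codewords a w + b v, with b
   ranging over a fixed l-subset B of F, then all agree with the lists
   S_i = {values of the codewords whose window contains i} on their window
   and with S_i = B v_i off D, so each misses at most d - e = k = r n
   coordinates: list recoverability is violated. *)

Lemma card_residue_class_le (N d l a : nat) : N <= d * l ->
  #|[set t : 'I_N | t %% d == a]| <= l.
Proof.
move=> hN; have [d0 | dpos] := posnP d.
  suff -> : [set t : 'I_N | t %% d == a] = set0 by rewrite cards0.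
  by apply/setP => t; move: (ltn_ord t) hN; rewrite !inE d0; lia.
have quot_lt (t : 'I_N) : t %/ d < l by rewrite ltn_divLR // mulnC (leq_trans _ hN).
rewrite -(card_ord l) -(@card_in_imset _ _ (fun t : 'I_N => Ordinal (quot_lt t))).
  exact: max_card.
move=> t1 t2; rewrite !inE => /eqP r1 /eqP r2 /(congr1 val) /= q12.
by apply: val_inj; rewrite /= (divn_eq t1 d) (divn_eq t2 d) q12 r1 r2.
Qed.

Lemma cyclic_windows (T : finType) (D : {set T}) (e m l : nat) :
  e <= #|D| -> e * m <= #|D| * l ->
  exists W : 'I_m -> {set T},
    [/\ forall j, W j \subset D, forall j, #|W j| = e
      & forall x, #|[set j | x \in W j]| <= l].
Proof.
move=> eD hem; have [-> | epos] := posnP e.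
  exists (fun=> set0); split=> [j | j | x]; rewrite ?sub0set ?cards0 //.
  by rewrite (_ : [set j | x \in set0] = set0) ?cards0 //; apply/setP => j; rewrite !inE.
set d := #|D| in eD hem *; have dpos : 0 < d := leq_trans epos eD.
have [x0 _] := card_gt0P dpos.
have size_enum : size (enum D) = d by rewrite -cardE.
have uniq_enum := enum_uniq (mem D).
pose slot (j : 'I_m) (u : 'I_e) := (j * e + u) %% d.
have slot_lt j u : slot j u < d by rewrite ltn_pmod.
exists (fun j => [set nth x0 (enum D) (slot j u) | u : 'I_e]); split.
- move=> j; apply/subsetP => _ /imsetP[u _ ->].
  by rewrite -mem_enum mem_nth ?size_enum.
- move=> j; rewrite card_imset ?card_ord // => u1 u2 /eqP.
  rewrite nth_uniq ?size_enum // eqn_modDl !modn_small; last 2 first.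
  + exact: leq_trans (ltn_ord u2) eD.
  + exact: leq_trans (ltn_ord u1) eD.
  by move/eqP/val_inj.
move=> x.
have quot_lt (t : 'I_(e * m)) : t %/ e < m by rewrite ltn_divLR // [m * e]mulnC.
pose quot t := Ordinal (quot_lt t).
apply: leq_trans (card_residue_class_le (index x (enum D)) hem).
apply: leq_trans (leq_imset_card quot _); apply: subset_leq_card.
apply/subsetP => j; rewrite inE => /imsetP[u _ ->].
have t_lt : j * e + u < e * m.
  by rewrite [e * m]mulnC -ltn_divLR // divnMDl // divn_small // addn0.
apply/imsetP; exists (Ordinal t_lt); first by rewrite inE /= index_uniq ?size_enum.
by apply: val_inj; rewrite /= divnMDl // divn_small // addn0.
Qed.

Lemma window_budget (d k l L : nat) : l <= L ->
  d <= k + l * k %/ (L.+1 - l) -> (d - k) * L.+1 <= d * l.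
Proof.
move=> lL hd; have [dk | kd] := leqP d k; first by rewrite (eqP dk).
have : (d - k) * (L.+1 - l) <= l * k by rewrite -leq_divRL; lia.
move: (L.+1 - l) (subnKC (leqW lL)) => s <-.
nia.
Qed.

Lemma exists_inj_in (T : finType) (A : {set T}) (m : nat) : m <= #|A| ->
  exists2 f : 'I_m -> T, injective f & forall j, f j \in A.
Proof.
move=> mA; exists (fun j => enum_val (widen_ord mA j)) => [j1 j2 | j].
  by move=> /enum_val_inj [] /val_inj.
exact: enum_valP.
Qed.

Lemma exists_inj_pairs_snd_in (T : finType) (l m : nat) :
  l <= #|T| -> m <= #|T| * l ->
  exists2 B : {set T}, #|B| = l &
    exists2 p : 'I_m -> T * T, injective p & forall j, (p j).2 \in B.
Proof.
move=> lT mTl; rewrite -cardsT in lT.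
have [g g_inj _] := exists_inj_in lT.
set B := [set g b | b : 'I_l]; have cardB : #|B| = l by rewrite card_imset ?card_ord.
have mTB : m <= #|setX [set: T] B| by rewrite cardsX cardsT cardB.
have [p p_inj pX] := exists_inj_in mTB.
by exists B => //; exists p => // j; move: (pX j); rewrite inE => /andP[].
Qed.

Lemma windowed_agreement (I J T : finType) (l : nat) (D : {set J})
    (W : I -> {set J}) (B : J -> {set T}) (x : I -> J -> T) :
  (forall i, #|[set j | i \in W j]| <= l) -> (forall i, #|B i| <= l) ->
  (forall j i, i \notin D -> x j i \in B i) ->
  exists2 S : J -> {set T}, forall i, #|S i| <= l &
    forall j, [set i | x j i \notin S i] \subset D :\: W j.
Proof.
move=> Wl Bl xB.
exists (fun i => if i \in D then [set x j i | j in [set j | i \in W j]] else B i).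
  by move=> i; case: ifP => // _; apply: leq_trans (leq_imset_card _ _) (Wl i).
move=> j; apply/subsetP => i; rewrite !inE.
case: (boolP (i \in D)) => iD; rewrite ?andbT ?andbF ?xB //.
by apply: contraNN => iW; apply: imset_f; rewrite inE.
Qed.

Local Open Scope ring_scope.

Section Plane.

Variables (K : fieldType) (V : vectType K).

Lemma exists_notin_line (U : {vspace V}) (w : V) : (1 < \dim U)%N ->
  exists2 v, v \in U & v \notin <[w]>%VS.
Proof.
move=> dimU; apply/subvPn; apply: contraL dimU => /dimvS.
by rewrite dim_vline -leqNgt => /leq_trans; apply; apply: leq_b1.
Qed.

Lemma line_pair_inj (w v : V) : w != 0 -> v \notin <[w]>%VS ->
  injective (fun ab : K * K => ab.1 *: w + ab.2 *: v).
Proof.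
move=> w0 vw [a1 b1] [a2 b2] /= eq12.
have hab : (b1 - b2) *: v = (a2 - a1) *: w.
  by apply/eqP; rewrite !scalerBl subr_eq addrAC -eq12 addrC addKr.
have [b12 | nb12] := eqVneq b1 b2.
  move: hab; rewrite b12 subrr scale0r => /esym/eqP.
  by rewrite scaler_eq0 (negbTE w0) orbF subr_eq0 => /eqP ->.
case/negP: vw; rewrite -[v](scalerK (_ : b1 - b2 != 0)) ?subr_eq0 // hab.
by rewrite memvZ // memvZ // memv_line.
Qed.

End Plane.

Theorem theorem6p3 (R : realFieldType) (F : finFieldType) (n l L k : nat)
    (r : R) (C : {vspace 'rV[F]_n}) :
  (1 <= l)%N -> (l <= #|F|)%N -> (l <= L)%N -> (L < l * #|F|)%N ->
  0 <= r -> r < 1 - l%:R / (L.+1)%:R ->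
  r * n%:R = k%:R ->
  list_recoverable (mem C) r l L ->
  (2 <= \dim C)%N ->
  forall c c' : 'rV[F]_n, c \in C -> c' \in C -> c != c' ->
    (k + (l * k) %/ (L.+1 - l) < hamming c c')%N.
Proof.
move=> _ lF lL LlF _ _ hr LR dimC c c' cC c'C cc'.
rewrite ltnNge; apply/negP => hd.
set D := [set i : 'I_n | c ord0 i != c' ord0 i] in hd.
set w := c - c'; have w0 : w != 0 by rewrite subr_eq0.
have [v vC vw] := exists_notin_line w dimC.
have [W [WD We Wl]] := cyclic_windows (leq_subr k #|D|) (window_budget lL hd).
rewrite mulnC in LlF; have [B Bl [p p_inj pB]] := exists_inj_pairs_snd_in lF LlF.
pose x j := (p j).1 *: w + (p j).2 *: v.
have x_inj : injective x := inj_comp (line_pair_inj w0 vw) p_inj.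
pose Bv (i : 'I_n) := [set b * v ord0 i | b in B].
have Bvl i : (#|Bv i| <= l)%N by rewrite -Bl leq_imset_card.
have xB j i : i \notin D -> x j ord0 i \in Bv i.
  rewrite inE negbK !mxE => /eqP ->; rewrite subrr mulr0 add0r.
  exact: imset_f (pB j).
have [S Sl xS] := windowed_agreement Wl Bvl xB.
have := LR S Sl; apply/negP; rewrite -ltnNge -[L.+1]card_ord -(card_imset _ x_inj).
apply: subset_leq_card; apply/subsetP => _ /imsetP[j _ ->].
rewrite inE memvD ?memvZ ?memvB //= hr ler_nat.
apply: leq_trans (subset_leq_card (xS j)) _.
by rewrite cardsD (setIidPr (WD j)) We; lia.
Qed.
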